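(* Let $d\ge k\ge2$, $n\ge1$, $\Delta>0$, and let $\sigma:\mathbb{R}\to\mathbb{R}$ be a measurable function applied entrywise. Let the readout be dense with equal entries, $\mathbf v=k^{-1/2}(1,\dots,1)\in\mathbb{R}^k$. Let $\mathbf W^0\in\mathbb{R}^{k\times d}$ be drawn uniformly from the Stiefel manifold of $k\times d$ matrices with orthonormal rows, with rows $\mathbf w^0_1,\dots,\mathbf w^0_k$. Let $\mathbf x_\mu\sim\mathcal N(0,\mathbf I_d)$ and $z_\mu\sim\mathcal N(0,1)$, $\mu\in[n]$, be i.i.d. and independent of $\mathbf W^0$, and let the data be $\mathcal D=(\mathbf x_\mu,y^{\rm out}_\mu)_{\mu\in[n]}$ with $y^{\rm out}_\mu=\mathbf v^\top\sigma(\mathbf W^0\mathbf x_\mu)+\sqrt\Delta\,z_\mu$. Let $\mathbf W^1$ (with rows $\mathbf w^1_j$) be a sample from the posterior $P(\mathbf W\mid\mathcal D)\propto\nu(\mathbf W)\prod_{\mu\le n}\exp\!\big(-\tfrac{1}{2\Delta}(y^{\rm out}_\mu-\mathbf v^\top\sigma(\mathbf W\mathbf x_\mu))^2\big)$, where $\nu$ is the uniform measure on the Stiefel manifold, and let $\mathbb{E}\langle\cdot\rangle$ denote expectation over $\mathcal D,\mathbf W^0$ and the posterior sample. Then there is an absolute constant $C>0$ such that for all $i\neq j$ in $[k]$, $\mathbb{E}\langle(\mathbf w^0_i\cdot\mathbf w^1_j)^2\rangle\le C/k$; in particular this is $O(d^{-1})$ when $k=\Theta(d)$.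
   Context: $\langle\cdot\rangle$ denotes expectation with respect to the posterior distribution $P(\mathbf W\mid\mathcal D)$ given above; $\mathbb{E}$ denotes expectation over the data and the teacher weights $\mathbf W^0$. *)

From HB Require Import structures.
From mathcomp Require Import all_boot all_order all_algebra.
From mathcomp Require Import all_classical all_reals all_analysis.
Set Implicit Arguments. Unset Strict Implicit. Unset Printing Implicit Defensive.
Import Order.TTheory GRing.Theory Num.Theory.
Local Open Scope classical_set_scope.
Local Open Scope ring_scope.

(* Borel sigma-algebra of R^(k*d): generated by the k*d coordinate maps. *)
Definition mxR (R : realType) (k d : nat) := 'M[R]_(k, d).
HB.instance Definition _ (R : realType) k d := Choice.on (mxR R k d).
HB.instance Definition _ (R : realType) k d :=
  isPointed.Build (mxR R k d) (0 : 'M[R]_(k, d)).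

Definition mx_coord (R : realType) k d (i : 'I_(k * d)) (A : mxR R k d) : R :=
  mxvec (A : 'M[R]_(k, d)) 0 i.

Fact mx_display : measure_display. Proof. exact. Qed.

Section mx_measurable.
Context (R : realType) (k d : nat).
Let G := g_sigma_preimage (@mx_coord R k d).
Let G0 : G set0. Proof. exact: sigma_algebra0. Qed.
Let GC A : G A -> G (~` A). Proof. exact: sigma_algebraC. Qed.
Let GU (F : (set (mxR R k d))^nat) : (forall i, G (F i)) -> G (\bigcup_i F i).
Proof. exact: sigma_algebra_bigcup. Qed.
HB.instance Definition _ := @isMeasurable.Build mx_display (mxR R k d) G G0 GC GU.
End mx_measurable.

Definition stiefel (R : realType) (k d : nat) : set (mxR R k d) :=
  [set W | (W : 'M[R]_(k, d)) *m W^T = 1%:M].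

Definition orthogonal_mx (R : realType) (m : nat) (O : 'M[R]_m) : Prop :=
  O *m O^T = 1%:M.

(* nu is the uniform (Haar) probability measure on the Stiefel manifold:
   a probability measure concentrated on V_k(R^d), invariant under the
   natural action of O(d) (right multiplication) and of O(k) (left
   multiplication). These properties characterise it uniquely. *)
Definition uniform_stiefel (R : realType) (k d : nat)
  (nu : probability (mxR R k d) R) : Prop :=
  [/\ measurable (@stiefel R k d),
      nu (@stiefel R k d) = 1%E,
      (forall O : 'M[R]_d, orthogonal_mx O -> forall A, measurable A ->
         nu ((fun W : mxR R k d => (W : 'M[R]_(k, d)) *m O : mxR R k d) @^-1` A)
         = nu A) &
      (forall Q : 'M[R]_k, orthogonal_mx Q -> forall A, measurable A ->
         nu ((fun W : mxR R k d => Q *m (W : 'M[R]_(k, d)) : mxR R k d) @^-1` A)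
         = nu A)].

(* gauss_iter m f = E[f(g)] for g_0,...,g_{m-1} i.i.d. N(0,1), as iterated
   integrals (Tonelli); coordinates >= m are set to 0. *)
Fixpoint gauss_iter (R : realType) (m : nat) (f : (nat -> R) -> \bar R) : \bar R :=
  match m with
  | 0 => f (fun _ => 0)
  | m'.+1 => (\int[normal_prob (0:R) 1]_x
               gauss_iter m' (fun g => f (fun i => if i == m' then x else g i)))%E
  end.

(* E[f(G)] for G a p x q matrix with i.i.d. N(0,1) entries. *)
Definition gauss_mx (R : realType) (p q : nat) (f : 'M[R]_(p, q) -> \bar R) : \bar R :=
  gauss_iter (p * q) (fun g => f (\matrix_(i < p, j < q) g (i * q + j)%N)).

Definition readout (R : realType) (k : nat) : 'cV[R]_k :=
  const_mx (Num.sqrt (k%:R))^-1.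

Definition net_out (R : realType) (k d : nat) (sigma : R -> R)
  (W : 'M[R]_(k, d)) (x : 'cV[R]_d) : R :=
  ((readout R k)^T *m map_mx sigma (W *m x)) 0 0.

(* data: X has rows x_mu^T, Z has entries z_mu *)
Definition y_out (R : realType) (k d n : nat) (sigma : R -> R) (Delta : R)
  (W0 : 'M[R]_(k, d)) (X : 'M[R]_(n, d)) (Z : 'rV[R]_n) (mu : 'I_n) : R :=
  net_out sigma W0 (row mu X)^T + Num.sqrt Delta * Z 0 mu.

Definition likelihood (R : realType) (k d n : nat) (sigma : R -> R) (Delta : R)
  (W0 : 'M[R]_(k, d)) (X : 'M[R]_(n, d)) (Z : 'rV[R]_n) (W : mxR R k d) : R :=
  \prod_(mu < n)
    expR (- (y_out sigma Delta W0 X Z mu - net_out sigma W (row mu X)^T) ^+ 2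
          / (2 * Delta)).

Definition post_avg (R : realType) (k d n : nat) (nu : probability (mxR R k d) R)
  (sigma : R -> R) (Delta : R) (W0 : 'M[R]_(k, d)) (X : 'M[R]_(n, d))
  (Z : 'rV[R]_n) (f : mxR R k d -> R) : R :=
  Rintegral nu setT (fun W => likelihood sigma Delta W0 X Z W * f W)
  / Rintegral nu setT (likelihood sigma Delta W0 X Z).

Definition row_dot (R : realType) (k d : nat) (A B : 'M[R]_(k, d)) (i j : 'I_k) : R :=
  (row i A *m (row j B)^T) 0 0.

Definition bayes_overlap2 (R : realType) (k d n : nat)
  (nu : probability (mxR R k d) R) (sigma : R -> R) (Delta : R) (i j : 'I_k) : \bar R :=
  (\int[nu]_W0
     gauss_mx (fun X : 'M[R]_(n, d) =>
       gauss_mx (fun Z : 'M[R]_(1, n) =>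
         (post_avg nu sigma Delta W0 X Z
            (fun W1 => (row_dot W0 W1 i j) ^+ 2))%:E)))%E.

From mathcomp Require Import all_boot all_order all_algebra.
From mathcomp Require Import all_classical all_reals all_analysis.
From mathcomp Require Import fingroup perm.
Set Implicit Arguments.
Unset Strict Implicit.
Unset Printing Implicit Defensive.
Import Order.TTheory GRing.Theory Num.Theory.
Local Open Scope ring_scope.
Local Open Scope classical_set_scope.
Import measurable_realfun.

(* Since the readout has equal entries, the likelihood is invariant under
   permutations of the rows of W, and so is the uniform measure on the Stiefel
   manifold.  Hence the posterior mean of (w0_i . w_j)^2 does not depend on j,
   so it is 1/k times the posterior mean of sum_j (w0_i . w_j)^2.  The rows of W
   are orthonormal, so by Bessel's inequality that sum is at most
   |w0_i|^2 = 1.  Thus C = 1 works for every realisation of the data. *)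

Lemma bigsetU_ordE T n (F : 'I_n -> set T) :
  \big[setU/set0]_(i < n) F i = \bigcup_i F i.
Proof.
rewrite -bigcup_seq; apply: eq_bigcupl; split=> i //= _; exact: mem_index_enum.
Qed.

Section matrix_measurability.
Variables (R : realType) (k d : nat).

Lemma measurable_mx_coord (c : 'I_(k * d)) : measurable_fun setT (@mx_coord R k d c).
Proof.
move=> _ B mB; rewrite setTI; apply: sub_sigma_algebra.
by rewrite bigsetU_ordE; exists c => //; exists B => //; rewrite setTI.
Qed.

Lemma measurable_mx_entry (a : 'I_k) (b : 'I_d) :
  measurable_fun setT (fun W : mxR R k d => (W : 'M[R]_(k, d)) a b).
Proof.
have -> : (fun W : mxR R k d => (W : 'M[R]_(k, d)) a b) = mx_coord (mxvec_index a b).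
  by apply/funext => W; rewrite /mx_coord mxvecE.
exact: measurable_mx_coord.
Qed.

Lemma measurable_fun_mx d' (T : measurableType d') (f : T -> mxR R k d) :
  (forall a b, measurable_fun setT (fun x => (f x : 'M[R]_(k, d)) a b)) ->
  measurable_fun setT f.
Proof.
move=> mf; apply: (measurability (\big[setU/set0]_(c < k * d)
  preimage_set_system setT (@mx_coord R k d c) measurable)) => //.
move=> _ [A + <-]; rewrite bigsetU_ordE => -[c _ [B mB <-]].
move: c B mB; case/mxvec_indexP => a b B mB.
have := mf a b measurableT B mB; rewrite !setTI.
by congr (measurable (preimage _ B)); apply/funext => x /=; rewrite /mx_coord mxvecE.
Qed.
End matrix_measurability.

Section nonneg_integral_bounds.
Context d (T : measurableType d) (R : realType).
Local Open Scope ereal_scope.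

(* No measurability is needed: the integral of a nonnegative function is the
   supremum of the integrals of the simple functions below it. *)
Lemma ge0_le_integralT (mu : {measure set T -> \bar R}) (f g : T -> \bar R) :
  (forall x, 0 <= f x) -> (forall x, f x <= g x) ->
  \int[mu]_x f x <= \int[mu]_x g x.
Proof.
move=> f0 fg; have g0 x : 0 <= g x by exact: le_trans (f0 x) (fg x).
rewrite !ge0_integralTE //; apply: le_ereal_sup => _ [h hf <-].
by exists h => //= x; exact: le_trans (hf x) (fg x).
Qed.

Lemma integral_prob_ge0_le (P : probability T R) (f : T -> \bar R) (c : R) :
  (forall x, 0 <= f x <= c%:E) -> 0 <= \int[P]_x f x <= c%:E.
Proof.
move=> f0c; apply/andP; split.
  by apply: integral_ge0 => x _; have /andP[] := f0c x.
apply: (@le_trans _ _ (\int[P]_x cst c%:E x)).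
  by apply: ge0_le_integralT => x; have /andP[] := f0c x.
by rewrite integral_cst // [X in _ * X](probability_setT P) mule1.
Qed.

End nonneg_integral_bounds.

Section gaussian_bounds.
Variable R : realType.
Local Open Scope ereal_scope.

Lemma gauss_iter_ge0_le m (f : (nat -> R) -> \bar R) (c : R) :
  (forall g, 0 <= f g <= c%:E) -> 0 <= gauss_iter m f <= c%:E.
Proof.
elim: m f => [|m IH] f f0c //=.
by apply: integral_prob_ge0_le => x; apply: IH => g; exact: f0c.
Qed.

Lemma gauss_mx_ge0_le p q (f : 'M[R]_(p, q) -> \bar R) (c : R) :
  (forall A, 0 <= f A <= c%:E) -> 0 <= gauss_mx f <= c%:E.
Proof. by move=> f0c; apply: gauss_iter_ge0_le => g; exact: f0c. Qed.

End gaussian_bounds.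

Section bessel.
Variable R : realFieldType.

Lemma mulmx_trmx_rowE n (v : 'rV[R]_n) : (v *m v^T) 0 0 = \sum_l v 0 l ^+ 2.
Proof. by rewrite mxE; apply: eq_bigr => l _; rewrite mxE expr2. Qed.

Lemma mulmx_trmx_row_ge0 n (v : 'rV[R]_n) : 0 <= (v *m v^T) 0 0.
Proof. by rewrite mulmx_trmx_rowE; apply: sumr_ge0 => l _; exact: sqr_ge0. Qed.

(* [W^T *m W] is the orthogonal projection onto the row space of [W], so the
   defect of the inequality is the squared norm of [u - u *m W^T *m W]. *)
Lemma bessel_mx k d (W : 'M[R]_(k, d)) (u : 'rV[R]_d) : W *m W^T = 1%:M ->
  (u *m W^T *m (u *m W^T)^T) 0 0 <= (u *m u^T) 0 0.
Proof.
move=> WWt; set P := W^T *m W.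
have PP : P *m P = P by rewrite /P mulmxA -(mulmxA W^T) WWt mulmx1.
have Pt : P^T = P by rewrite /P trmx_mul trmxK.
have defect : ((u - u *m P) *m (u - u *m P)^T) 0 0
    = (u *m u^T) 0 0 - (u *m W^T *m (u *m W^T)^T) 0 0.
  rewrite linearB /= trmx_mul Pt mulmxBl !mulmxBr (mulmxA (u *m P)).
  rewrite -(mulmxA u P P) PP mulmxA subrr subr0 trmx_mul trmxK.
  by rewrite !mulmxA -(mulmxA u W^T W) !mxE.
by rewrite -subr_ge0 -defect mulmx_trmx_row_ge0.
Qed.

End bessel.

Section network.
Variable R : realType.

Lemma row_dotE k d (A B : 'M[R]_(k, d)) i j : row_dot A B i j = \sum_l A i l * B j l.
Proof. by rewrite /row_dot mxE; apply: eq_bigr => l _; rewrite !mxE. Qed.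

Lemma sum_row_dot_sqr_le k d (A W : 'M[R]_(k, d)) i : W *m W^T = 1%:M ->
  \sum_j row_dot A W i j ^+ 2 <= \sum_l A i l ^+ 2.
Proof.
move=> WWt; have := @bessel_mx _ _ _ W (row i A) WWt; rewrite !mulmx_trmx_rowE.
congr (_ <= _); apply: eq_bigr => l _; rewrite !mxE //.
by rewrite row_dotE; congr (_ ^+ 2); apply: eq_bigr => m _; rewrite !mxE.
Qed.

Lemma net_outE k d sigma (W : 'M[R]_(k, d)) x :
  net_out sigma W x = \sum_a (Num.sqrt k%:R)^-1 * sigma (\sum_b W a b * x b 0).
Proof. by rewrite /net_out mxE; apply: eq_bigr => a _; rewrite !mxE. Qed.

Lemma measurable_net_out k d sigma x : measurable_fun setT sigma ->
  measurable_fun setT (fun W : mxR R k d => net_out sigma W x).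
Proof.
move=> msigma; under eq_fun do rewrite net_outE.
apply: measurable_sum => a; apply: measurable_funM; first exact: measurable_cst.
apply: measurableT_comp msigma _; apply: measurable_sum => b.
by apply: measurable_funM; [exact: measurable_mx_entry | exact: measurable_cst].
Qed.

Lemma measurable_likelihood k d n sigma Delta W0 (X : 'M[R]_(n, d)) Z :
  measurable_fun setT sigma ->
  measurable_fun setT (@likelihood R k d n sigma Delta W0 X Z).
Proof.
move=> msigma; apply: measurable_prod => mu _.
apply: (measurableT_comp (@measurable_expR R)); apply: measurable_funM => //.
apply: measurableT_comp; first exact: measurable_funN.
apply: measurable_funX.
by apply: measurable_funB => //; exact: measurable_net_out.
Qed.

Lemma measurable_row_dot k d (A : 'M[R]_(k, d)) i j :
  measurable_fun setT (fun W : mxR R k d => row_dot A W i j).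
Proof.
under eq_fun do rewrite row_dotE.
by apply: measurable_sum => l; apply: measurable_funM => //; exact: measurable_mx_entry.
Qed.

Lemma likelihood_ge0 k d n sigma Delta W0 (X : 'M[R]_(n, d)) Z (W : mxR R k d) :
  0 <= likelihood sigma Delta W0 X Z W.
Proof. by apply: prodr_ge0 => mu _; exact: expR_ge0. Qed.

Lemma likelihood_le1 k d n sigma Delta W0 (X : 'M[R]_(n, d)) Z (W : mxR R k d) :
  0 <= Delta -> likelihood sigma Delta W0 X Z W <= 1.
Proof.
move=> Delta0; apply: prodr_ile1 => mu _; rewrite expR_ge0 expR_le1 mulNr oppr_le0.
by rewrite divr_ge0 ?sqr_ge0 ?mulr_ge0.
Qed.

Lemma net_out_row_perm k d sigma (s : 'S_k) (W : 'M[R]_(k, d)) x :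
  net_out sigma (row_perm s W) x = net_out sigma W x.
Proof.
rewrite !net_outE [RHS](reindex_inj (@perm_inj _ s)) /=.
by apply: eq_bigr => a _; congr (_ * sigma _); apply: eq_bigr => b _; rewrite mxE.
Qed.

Lemma likelihood_row_perm k d n sigma Delta W0 (X : 'M[R]_(n, d)) Z (s : 'S_k) W :
  @likelihood R k d n sigma Delta W0 X Z (row_perm s W) =
  likelihood sigma Delta W0 X Z W.
Proof. by apply: eq_bigr => mu _; rewrite net_out_row_perm. Qed.

Lemma row_dot_row_perm k d (s : 'S_k) (A W : 'M[R]_(k, d)) i j :
  row_dot A (row_perm s W) i j = row_dot A W i (s j).
Proof. by rewrite !row_dotE; apply: eq_bigr => l _; rewrite mxE. Qed.

End network.

Section uniform_stiefel_integrals.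
Variables (R : realType) (k d : nat) (nu : probability (mxR R k d) R).
Hypothesis nu_uniform : uniform_stiefel nu.
Local Open Scope ereal_scope.

Lemma ae_stiefel (P : mxR R k d -> Prop) :
  (forall W, stiefel W -> P W) -> {ae nu, forall W, P W}.
Proof.
case: nu_uniform => mS nuS _ _ SP; exists (~` @stiefel R k d); split.
- exact: measurableC.
- by rewrite probability_setC // nuS subee.
- by move=> W /= notPW SW; apply: notPW; exact: SP.
Qed.

Lemma measurable_mulmxl (Q : 'M[R]_k) :
  measurable_fun setT (fun W : mxR R k d => Q *m W : mxR R k d).
Proof.
apply: measurable_fun_mx => a b; under eq_fun do rewrite mxE.
by apply: measurable_sum => c; apply: measurable_funM => //; exact: measurable_mx_entry.
Qed.

Lemma ge0_integral_mulmxl (Q : 'M[R]_k) (g : mxR R k d -> \bar R) :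
  orthogonal_mx Q -> measurable_fun setT g -> (forall W, 0 <= g W) ->
  \int[nu]_W g (Q *m W : mxR R k d) = \int[nu]_W g W.
Proof.
case: nu_uniform => _ _ _ nu_inv Qorth mg g0.
rewrite [RHS](eq_measure_integral (pushforward nu
  (fun W : mxR R k d => Q *m W : mxR R k d))); last first.
- by move=> mQ A mA _; rewrite /pushforward; symmetry; exact: nu_inv.
- by move=> mQ; rewrite ge0_integral_pushforward.
- exact: measurable_mulmxl.
Qed.

Lemma ge0_integral_row_perm (s : 'S_k) (g : mxR R k d -> \bar R) :
  measurable_fun setT g -> (forall W, 0 <= g W) ->
  \int[nu]_W g (row_perm s W : mxR R k d) = \int[nu]_W g W.
Proof.
move=> mg g0; under eq_integral do rewrite row_permE.
apply: ge0_integral_mulmxl => //.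
by rewrite /orthogonal_mx tr_perm_mx -perm_mxM mulgV perm_mx1.
Qed.

Lemma integral_row_sqr_norm (i : 'I_k) (c : R) :
  \int[nu]_W ((\sum_l (W : 'M[R]_(k, d)) i l ^+ 2) * c)%:E = c%:E.
Proof.
rewrite (@ae_eq_integral _ _ _ nu setT (cst c%:E)) //.
- by rewrite integral_cst // [X in _ * X](probability_setT nu) mule1.
- apply/measurable_EFinP; apply: measurable_funM => //.
  by apply: measurable_sum => l; apply: measurable_funX; exact: measurable_mx_entry.
apply: ae_stiefel => W SW _.
have rowi : (\sum_l (W : 'M[R]_(k, d)) i l ^+ 2 = 1)%R.
  have := congr1 (fun M : 'M[R]_k => M i i) SW; rewrite !mxE eqxx mulr1n => <-.
  by apply: eq_bigr => l _; rewrite mxE expr2.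
by rewrite rowi mul1r.
Qed.

End uniform_stiefel_integrals.

Lemma fine_div_le_of_natmul (R : realType) (e r : \bar R) (c : R) m :
  (0 < m)%N -> 0 <= c -> (0 <= e)%E -> (0 <= r)%E -> r \is a fin_num ->
  (e *+ m <= c%:E * r)%E -> 0 <= fine e / fine r <= c / m%:R.
Proof.
case: m => // m _ c0 + + /fineK r_fin; rewrite -{}r_fin; move: (fine r) => {}r.
case: e => [e | | //]; last by rewrite enatmul_pinfty -EFinM leye_eq.
rewrite !lee_fin -EFin_natmul lee_fin /= => e0 r0 emc.
apply/andP; split; first exact: divr_ge0.
have [->|r_neq0] := eqVneq r 0; first by rewrite invr0 mulr0 divr_ge0.
have r_gt0 : 0 < r by rewrite lt_def r_neq0.
by rewrite ler_pdivrMr // mulrAC ler_pdivlMr // mulr_natr.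
Qed.

Section posterior_overlap.
Variables (R : realType) (k d n : nat) (nu : probability (mxR R k d) R).
Variables (sigma : R -> R) (Delta : R).
Variables (W0 : 'M[R]_(k, d)) (X : 'M[R]_(n, d)) (Z : 'rV[R]_n) (i : 'I_k).
Hypotheses (nu_uniform : uniform_stiefel nu) (Delta_ge0 : 0 <= Delta).
Hypothesis sigma_measurable : measurable_fun setT sigma.

Local Notation L := (likelihood sigma Delta W0 X Z).
Let overlap j (W : mxR R k d) := L W * row_dot W0 W i j ^+ 2.

Let measurable_overlap j : measurable_fun setT (overlap j).
Proof.
apply: measurable_funM; first exact: measurable_likelihood.
by apply: measurable_funX; exact: measurable_row_dot.
Qed.

Let overlap_ge0 j W : 0 <= overlap j W.
Proof. by rewrite mulr_ge0 ?likelihood_ge0 ?sqr_ge0. Qed.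

Local Open Scope ereal_scope.

Lemma integral_overlap_tperm j j' :
  \int[nu]_W (overlap j W)%:E = \int[nu]_W (overlap j' W)%:E.
Proof.
rewrite -(ge0_integral_row_perm nu_uniform (tperm j j')); last 2 first.
- exact/measurable_EFinP.
- by move=> W; rewrite lee_fin.
by apply: eq_integral => W _; rewrite /overlap likelihood_row_perm row_dot_row_perm tpermL.
Qed.

(* Permutation symmetry turns [k] copies of the [j]-th overlap into the sum over
   all [j'], which Bessel's inequality bounds on the Stiefel manifold. *)
Lemma integral_overlap_natmul_le j :
  (\int[nu]_W (overlap j W)%:E) *+ k
    <= (\sum_l W0 i l ^+ 2)%:E * \int[nu]_W (L W)%:E.
Proof.
have -> : (\int[nu]_W (overlap j W)%:E) *+ k
    = \sum_(j' < k) \int[nu]_W (overlap j' W)%:E.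
  rewrite (eq_bigr (fun=> \int[nu]_W (overlap j W)%:E)) ?sumr_const ?card_ord //.
  by move=> j' _; exact: integral_overlap_tperm.
rewrite -ge0_integral_sum //; last 2 first.
- by move=> j'; exact/measurable_EFinP.
- by move=> j' W _; rewrite lee_fin.
rewrite -ge0_integralZl_EFin //; last 3 first.
- by move=> W _; rewrite lee_fin likelihood_ge0.
- by apply/measurable_EFinP; exact: measurable_likelihood.
- by apply: sumr_ge0 => l _; rewrite sqr_ge0.
apply: ae_ge0_le_integral => //.
- by move=> W _; apply: sume_ge0 => j' _; rewrite lee_fin.
- by apply: emeasurable_sum => j'; exact/measurable_EFinP.
- by move=> W _; rewrite -EFinM lee_fin mulr_ge0 ?likelihood_ge0 ?sumr_ge0 // => l _;
     rewrite sqr_ge0.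
- apply/measurable_EFinP; apply: measurable_funM => //.
  exact: measurable_likelihood.
apply: ae_stiefel => // W SW _; rewrite sumEFin -EFinM lee_fin.
rewrite /overlap -mulr_sumr mulrC ler_wpM2r ?likelihood_ge0 //.
exact: sum_row_dot_sqr_le.
Qed.

Lemma post_avg_overlap_ge0_le j :
  (0 <= post_avg nu sigma Delta W0 X Z (fun W => row_dot W0 W i j ^+ 2)
     <= (\sum_l W0 i l ^+ 2) / k%:R)%R.
Proof.
apply: fine_div_le_of_natmul (integral_overlap_natmul_le j).
- exact: leq_ltn_trans (leq0n i) (ltn_ord i).
- by apply: sumr_ge0 => l _; exact: sqr_ge0.
- by apply: integral_ge0 => W _; rewrite lee_fin.
- by apply: integral_ge0 => W _; rewrite lee_fin likelihood_ge0.
have /andP[L0 L1] : 0 <= \int[nu]_W (L W)%:E <= 1%:E.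
  by apply: integral_prob_ge0_le => W; rewrite !lee_fin likelihood_ge0 likelihood_le1.
by rewrite ge0_fin_numE // (le_lt_trans L1) ?ltry.
Qed.

End posterior_overlap.

Theorem mainTheorem2 (R : realType) :
  exists C : R, 0 < C /\
  forall (k d n : nat) (Delta : R) (sigma : R -> R)
         (nu : probability (mxR R k d) R),
    (2 <= k)%N -> (k <= d)%N -> (1 <= n)%N -> 0 < Delta ->
    measurable_fun setT sigma ->
    uniform_stiefel nu ->
    forall i j : 'I_k, i != j ->
      (bayes_overlap2 n nu sigma Delta i j <= (C / k%:R)%:E)%E.
Proof.
exists 1; split=> // k d n Delta sigma nu _ _ _ Delta_gt0 sigma_measurable
  nu_uniform i j _.
have inner_le W0 : (0 <= gauss_mx (fun X : 'M[R]_(n, d) =>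
    gauss_mx (fun Z : 'M[R]_(1, n) =>
      (post_avg nu sigma Delta W0 X Z (fun W1 => row_dot W0 W1 i j ^+ 2))%:E))
  <= ((\sum_l (W0 : 'M[R]_(k, d)) i l ^+ 2) / k%:R)%:E)%E.
  apply: gauss_mx_ge0_le => X; apply: gauss_mx_ge0_le => Z; rewrite !lee_fin.
  exact: post_avg_overlap_ge0_le (ltW Delta_gt0) sigma_measurable j.
rewrite div1r -(integral_row_sqr_norm nu_uniform i).
by apply: ge0_le_integralT => W0; have /andP[] := inner_le W0.
Qed.
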